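(* Let $\mathcal G$ be an undirected connected graph on the agent set $\mathcal V=\{1,\dots,N\}$ with symmetric nonnegative weights $a_{ij}=a_{ji}$, where $a_{ij}>0$ if and only if $j\in\mathcal N_i$ (the neighbor set of $i$), and let $L$ be its weighted Laplacian ($l_{ij}=-a_{ij}$ for $i\ne j$, $l_{ii}=\sum_{j\ne i}a_{ij}$), with $\lambda_2>0$ its smallest nonzero eigenvalue. Fix a common amplitude $A_{\rm m}>0$ and, for each ordered pair $(i,j)$ with $j\in\mathcal N_i$, a constant frequency $\omega_{ij}$ (chosen at random by agent $i$), and set $s_{ij}(t)=A_{\rm m}\sin(\omega_{ij}t)$. Each agent forms the masking signal $m_i(t)=\sum_{j\in\mathcal N_i}\big(s_{ji}(t)-s_{ij}(t)\big)$ and the masked reference $z_{{\rm m},i}(t)=z_i(t)+m_i(t)$, where $z_i:[0,\infty)\to\mathbb R$ is its continuously differentiable reference signal with bounded derivative $\dot z_i$. For a gain $\beta>0$, each agent runs $$\dot{\hat z}_{{\rm a},i}(t)=\dot z_{{\rm m},i}(t)-\beta\sum_{j=1}^N a_{ij}\big(\hat z_{{\rm a},i}(t)-\hat z_{{\rm a},j}(t)\big),\qquad \hat z_{{\rm a},i}(0)=z_i(0)+m_i(0).$$ Then each estimate $\hat z_{{\rm a},i}(t)$ tracks the true average $\frac1N\mathbf 1_N^{\rm T}z(t)$, where $z(t)=[z_1(t)\,\cdots\,z_N(t)]^{\rm T}$, with a bounded steady-state deviation that decreases as $\beta$ increases; precisely, there is a constant $c\ge 0$ depending on the reference signals, the masking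 signals and the graph but not on $\beta$, such that for every $\beta>0$ and every $i\in\mathcal V$, $$\limsup_{t\to\infty}\Big|\hat z_{{\rm a},i}(t)-\tfrac1N\mathbf 1_N^{\rm T}z(t)\Big|\le \frac{c}{\beta}.$$
   Context: $\mathbf 1_N$ denotes the all-ones vector in $\mathbb R^N$. The signal $s_{ij}$ is generated by agent $i$ and sent to neighbor $j$; hence $m_i$ uses the signals $s_{ji}$ received from neighbors and the signals $s_{ij}$ sent to them. *)

From HB Require Import structures.
From mathcomp Require Import all_boot all_order all_algebra.
From mathcomp Require Import all_classical all_reals all_analysis.
Set Implicit Arguments. Unset Strict Implicit. Unset Printing Implicit Defensive.
Import Order.TTheory GRing.Theory Num.Theory.
Import numFieldNormedType.Exports.
Local Open Scope classical_set_scope.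
Local Open Scope ring_scope.

(* Weighted undirected graph on agents 'I_N given by weights a i j.
   Neighbour relation: j \in N_i  <->  0 < a i j. *)
Definition weights_ok (R : realType) (N : nat) (a : 'I_N -> 'I_N -> R) : Prop :=
  (forall i j, a i j = a j i) /\ (forall i j, 0 <= a i j).

Definition graph_connected (R : realType) (N : nat) (a : 'I_N -> 'I_N -> R) : Prop :=
  forall i j : 'I_N, connect (fun u v : 'I_N => 0 < a u v) i j.

Definition sig (R : realType) (N : nat) (Am : R) (w : 'I_N -> 'I_N -> R)
  (i j : 'I_N) (t : R) : R := Am * sin (w i j * t).

Definition mask (R : realType) (N : nat) (a : 'I_N -> 'I_N -> R) (Am : R)
  (w : 'I_N -> 'I_N -> R) (i : 'I_N) (t : R) : R :=
  \sum_(j < N | 0 < a i j) (sig Am w j i t - sig Am w i j t).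

Definition ref_signal_ok (R : realType) (f : R -> R) : Prop :=
  {within `[0, +oo[, continuous f} /\
  (forall t : R, 0 < t -> derivable f t 1) /\
  {in `]0, +oo[, continuous (derive1 f)} /\
  (exists M : R, forall t : R, 0 < t -> `|derive1 f t| <= M).

Definition estimator_solution (R : realType) (N : nat) (a : 'I_N -> 'I_N -> R)
  (Am : R) (w : 'I_N -> 'I_N -> R) (z : 'I_N -> R -> R) (beta : R)
  (zh : 'I_N -> R -> R) : Prop :=
  forall i : 'I_N,
    {within `[0, +oo[, continuous (zh i)} /\
    zh i 0 = z i 0 + mask a Am w i 0 /\
    (forall t : R, 0 < t ->
       derivable (zh i) t 1 /\
       derive1 (zh i) t =
         derive1 (fun s => z i s + mask a Am w i s) t
         - beta * \sum_(j < N) a i j * (zh i t - zh j t)).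

From Pilot Require Import Defs.
From HB Require Import structures.
From mathcomp Require Import all_boot all_order all_algebra.
From mathcomp Require Import all_classical all_reals all_analysis.
From mathcomp Require Import ring lra.
Import Order.TTheory GRing.Theory Num.Theory.
Import numFieldNormedType.Exports.
Local Open Scope classical_set_scope.
Local Open Scope ring_scope.

(* The dynamics preserve sum_i zh_i - sum_i z_m,i, which vanishes at t = 0, and
   the masks cancel in the sum (s_ij enters m_j with sign + and m_i with sign -),
   so the estimates always average to the true average.  Their disagreement
   V = sum_i (zh_i - avg zh)^2 then satisfies V' <= - k V + Q / k with
   k = beta / (2 C): the coupling contributes - beta sum_ij a_ij (zh_i - zh_j)^2,
   which dominates (beta / C) V by a Poincare inequality on the connected graph,
   and Young's inequality absorbs the inputs, whose squared derivatives sum to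
   at most Q.  By Gronwall, V is eventually below Q / k^2 + o(1), that is
   |zh_i - avg zh| <= 2 C sqrt Q / beta + o(1). *)

Section NonnegSums.
Context {R : numDomainType} {I : finType}.

Lemma ler_term_sum (F : I -> R) i : (forall j, 0 <= F j) -> F i <= \sum_j F j.
Proof.
move=> F_ge0; rewrite (bigD1 i) //= lerDl.
by apply: sumr_ge0 => j _; exact: F_ge0.
Qed.

End NonnegSums.

Section Laplacian.
Context {R : realFieldType} {n : nat}.
Implicit Types (a : 'I_n -> 'I_n -> R) (x : 'I_n -> R).

Definition avg x := (\sum_(j < n) x j) / n%:R.
Definition disagreement x := \sum_(i < n) (x i - avg x) ^+ 2.
Definition laplacian a x i := \sum_(j < n) a i j * (x i - x j).
Definition laplacian_form a x :=
  \sum_(i < n) \sum_(j < n) a i j * (x i - x j) ^+ 2.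

Let sum_dim0 (F : 'I_n -> R) : n = 0%N -> \sum_(i < n) F i = 0.
Proof.
by move=> n0; apply: big1 => -[i i_lt] _; exfalso; rewrite n0 in i_lt.
Qed.

Lemma sum_sub_avg x : \sum_(i < n) (x i - avg x) = 0.
Proof.
have [n0|n_gt0] := posnP n; first exact: sum_dim0.
rewrite sumrB sumr_const card_ord /avg -[_ *+ n]mulr_natr divfK ?subrr //.
by rewrite pnatr_eq0 -lt0n.
Qed.

Lemma sum_sqr_sub_pairs x :
  \sum_(i < n) \sum_(j < n) (x i - x j) ^+ 2 = disagreement x *+ (2 * n).
Proof.
pose d i := x i - avg x.
have sqr_sub i j : (x i - x j) ^+ 2 = d i ^+ 2 + d j ^+ 2 - 2 * d i * d j.
  by rewrite /d; ring.
have d_sum0 : \sum_(i < n) d i = 0 := sum_sub_avg x.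
under eq_bigr => i _ do under eq_bigr => j _ do rewrite sqr_sub.
under eq_bigr => i _ do
  rewrite sumrB big_split /= sumr_const card_ord -mulr_sumr d_sum0 mulr0 subr0.
rewrite big_split /= sumr_const card_ord sumrMnl.
by rewrite [(2 * n)%N]mulnC mulrnA mulr2n.
Qed.

Lemma disagreement_le_pairs x :
  disagreement x <= \sum_(i < n) \sum_(j < n) (x i - x j) ^+ 2.
Proof.
rewrite sum_sqr_sub_pairs.
have V_ge0 : 0 <= disagreement x by apply: sumr_ge0 => i _; exact: sqr_ge0.
have [n0|n_gt0] := posnP n.
  by rewrite /disagreement sum_dim0 // mul0rn.
by rewrite -mulr_natr ler_peMr // ler1n muln_gt0.
Qed.

Lemma sum_laplacian a x :
  (forall i j, a i j = a j i) -> \sum_(i < n) laplacian a x i = 0.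
Proof.
move=> a_sym; set T := \sum_(i < n) _.
have T_opp : T = - T.
  rewrite {1}/T exchange_big /= /T -sumrN; apply: eq_bigr => i _.
  by rewrite -sumrN; apply: eq_bigr => j _; rewrite a_sym; ring.
by apply/eqP; rewrite -[_ == _](mulrn_eq0 _ 2) mulr2n {1}T_opp addNr.
Qed.

(* Symmetrizing the double sum turns each product into half a square. *)
Lemma laplacian_formE a x m : (forall i j, a i j = a j i) ->
  2 * \sum_(i < n) (x i - m) * laplacian a x i = laplacian_form a x.
Proof.
move=> a_sym.
pose T := \sum_(i < n) \sum_(j < n) a i j * ((x i - m) * (x i - x j)).
pose T' := \sum_(i < n) \sum_(j < n) a i j * ((x j - m) * (x j - x i)).
have -> : \sum_(i < n) (x i - m) * laplacian a x i = T.
  by apply: eq_bigr => i _; rewrite mulr_sumr; apply: eq_bigr => j _; ring.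
have T_swap : T = T'.
  rewrite /T /T' exchange_big /=; apply: eq_bigr => i _; apply: eq_bigr => j _.
  by rewrite a_sym.
rewrite mulr2n mulrDl mul1r {2}T_swap /T /T' -big_split /=.
by apply: eq_bigr => i _; rewrite -big_split /=; apply: eq_bigr => j _; ring.
Qed.

Lemma laplacian_form_ge_term a x i j : (forall i j, 0 <= a i j) ->
  a i j * (x i - x j) ^+ 2 <= laplacian_form a x.
Proof.
move=> a_ge0; have term_ge0 u v : 0 <= a u v * (x u - x v) ^+ 2.
  by rewrite mulr_ge0 ?sqr_ge0.
apply: (le_trans (ler_term_sum (fun j => a i j * (x i - x j) ^+ 2) j _)) => //.
by apply: (ler_term_sum (fun i => \sum_j a i j * (x i - x j) ^+ 2) i) => u;
  apply: sumr_ge0.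
Qed.

Lemma sqr_sub_path_le a (p : seq 'I_n) i : (forall i j, 0 <= a i j) ->
  path (fun u v => 0 < a u v) i p ->
  exists C, 0 <= C /\
    forall x, (x i - x (last i p)) ^+ 2 <= C * laplacian_form a x.
Proof.
move=> a_ge0; elim: p i => [|k p IHp] i /=.
  by move=> _; exists 0; split => // x; rewrite subrr expr0n mul0r.
move=> /andP [a_ik /IHp [C [C_ge0 HC]]].
exists (2 / a i k + 2 * C); split.
  by apply: addr_ge0; [apply: divr_ge0 => //; exact: ltW | exact: mulr_ge0].
move=> x; set S := laplacian_form a x.
have first_edge : (x i - x k) ^+ 2 <= S / a i k.
  by rewrite ler_pdivlMr // mulrC laplacian_form_ge_term.
have rest : (x k - x (last k p)) ^+ 2 <= C * S := HC x.
set q := x i - x k in first_edge *; set s := x k - x (last k p) in rest *.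
have -> : x i - x (last k p) = q + s by rewrite /q /s; ring.
have sqr_add_le : (q + s) ^+ 2 <= 2 * q ^+ 2 + 2 * s ^+ 2.
  by rewrite -subr_ge0 (_ : _ - _ = (q - s) ^+ 2) ?sqr_ge0 //; ring.
have -> : (2 / a i k + 2 * C) * S = 2 * (S / a i k) + 2 * (C * S) by ring.
lra.
Qed.

Lemma poincare_laplacian {a} : (forall i j, 0 <= a i j) ->
  (forall i j, connect (fun u v => 0 < a u v) i j) ->
  exists C, 0 < C /\ forall x, disagreement x <= C * laplacian_form a x.
Proof.
move=> a_ge0 a_conn.
have pair_bound (ij : 'I_n * 'I_n) : exists C, 0 <= C /\
    forall x, (x ij.1 - x ij.2) ^+ 2 <= C * laplacian_form a x.
  case: ij => i j /=; have /connectP [p a_path ->] := a_conn i j.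
  exact: sqr_sub_path_le.
have [Cp HCp] := choice pair_bound.
pose C := \sum_(i < n) \sum_(j < n) Cp (i, j).
have C_ge0 : 0 <= C.
  by apply: sumr_ge0 => i _; apply: sumr_ge0 => j _; have [] := HCp (i, j).
exists (1 + C); split; first by rewrite ltr_pwDl.
move=> x; apply: (le_trans (disagreement_le_pairs x)).
have S_ge0 : 0 <= laplacian_form a x.
  by apply: sumr_ge0 => i _; apply: sumr_ge0 => j _; rewrite mulr_ge0 ?sqr_ge0.
apply: (@le_trans _ _ (C * laplacian_form a x)).
  rewrite /C mulr_suml; apply: ler_sum => i _; rewrite mulr_suml.
  by apply: ler_sum => j _; have [_] := HCp (i, j).
by rewrite ler_wpM2r ?lerDr.
Qed.

End Laplacian.

Section WithinContinuity.
Context {T : topologicalType} {R : numFieldType} {A : set T}.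

Lemma within_continuousD {f g : T -> R} : {within A, continuous f} ->
  {within A, continuous g} -> {within A, continuous (fun s => f s + g s)}.
Proof. by move=> cf cg x; exact: (continuousD (cf x) (cg x)). Qed.

Lemma within_continuousB {f g : T -> R} : {within A, continuous f} ->
  {within A, continuous g} -> {within A, continuous (fun s => f s - g s)}.
Proof. by move=> cf cg x; exact: (continuousB (cf x) (cg x)). Qed.

Lemma within_continuousM {f g : T -> R} : {within A, continuous f} ->
  {within A, continuous g} -> {within A, continuous (fun s => f s * g s)}.
Proof. by move=> cf cg x; exact: (continuousM (cf x) (cg x)). Qed.

Lemma within_continuous_sum {n} {h : 'I_n -> T -> R} :
  (forall i, {within A, continuous (h i)}) ->
  {within A, continuous (fun s => \sum_(i < n) h i s)}.
Proof.
move=> ch; have -> : (fun s => \sum_(i < n) h i s) = \sum_(i < n) h i.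
  by apply/funext => s; rewrite fct_sumE.
elim/big_ind: _ => // [x|f g]; first exact: cst_continuous.
exact: within_continuousD.
Qed.

End WithinContinuity.

Section RealCalculus.
Context {R : realType}.

Lemma is_derive_sum_apply {n} {h : 'I_n -> R -> R} {dh : 'I_n -> R} {t : R} :
  (forall i, is_derive t 1 (h i) (dh i)) ->
  is_derive t 1 (fun s => \sum_(i < n) h i s) (\sum_(i < n) dh i).
Proof.
move=> dh_ok; have -> : (fun s => \sum_(i < n) h i s) = \sum_(i < n) h i.
  by apply/funext => s; rewrite fct_sumE.
exact: is_derive_sum.
Qed.

Lemma is_derive_mulr_cst (f : R -> R) (c t df : R) :
  is_derive t 1 f df -> is_derive t 1 (fun s => f s * c) (df * c).
Proof.
move=> f_der; apply: is_derive_eq (is_deriveM f_der (is_derive_cst c t 1)) _.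
by rewrite /GRing.scale /= mulr0 add0r mulrC.
Qed.

Lemma is_derive_scale_id (k t : R) : is_derive t 1 (fun s => k * s) k.
Proof. exact: is_derive_eq (is_deriveZ k (is_derive_id t 1)) (mulr1 k). Qed.

Lemma is_derive_derive1 {f : R -> R} {t : R} :
  derivable f t 1 -> is_derive t 1 f (derive1 f t).
Proof. by rewrite derive1E; exact: derivableP. Qed.

Lemma is_derive_sqr (f : R -> R) (t df : R) : is_derive t 1 f df ->
  is_derive t 1 (fun s => f s ^+ 2) (2 * f t * df).
Proof.
move=> f_der; have -> : (fun s => f s ^+ 2) = f ^+ 2.
  by apply/funext => s; rewrite /= expr2.
by apply: is_derive_eq; rewrite /= expr1 /GRing.scale /= mulrC.
Qed.

Lemma is_derive_disagreement {n} {y : 'I_n -> R -> R} {dy : 'I_n -> R} {t : R} :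
  (forall i, is_derive t 1 (y i) (dy i)) ->
  is_derive t 1 (fun s => disagreement (y^~ s))
    (2 * \sum_(i < n) (y i t - avg (y^~ t)) * dy i).
Proof.
move=> dy_ok.
have avg_der : is_derive t 1 (fun s => avg (y^~ s)) (avg dy).
  exact/is_derive_mulr_cst/is_derive_sum_apply.
have sqr_der i : is_derive t 1 (fun s => (y i s - avg (y^~ s)) ^+ 2)
    (2 * (y i t - avg (y^~ t)) * (dy i - avg dy)).
  exact: is_derive_sqr (is_deriveB (dy_ok i) avg_der).
rewrite /disagreement; apply: is_derive_eq (is_derive_sum_apply sqr_der) _.
set d := fun i => y i t - avg (y^~ t).
have -> : \sum_(i < n) 2 * d i * (dy i - avg dy) =
    2 * \sum_(i < n) d i * dy i - 2 * (\sum_(i < n) d i) * avg dy.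
  rewrite !mulr_sumr mulr_suml -sumrB; apply: eq_bigr => i _; ring.
by rewrite sum_sub_avg mulr0 mul0r subr0.
Qed.

Lemma within_continuous_disagreement n (A : set R) (y : 'I_n -> R -> R) :
  (forall i, {within A, continuous (y i)}) ->
  {within A, continuous (fun s => disagreement (y^~ s))}.
Proof.
move=> y_cont; apply: within_continuous_sum => i.
have avg_cont : {within A, continuous (fun s => avg (y^~ s))}.
  apply: within_continuousM; first exact: within_continuous_sum.
  exact/continuous_subspaceT/cst_continuous.
have dev_cont := within_continuousB (y_cont i) avg_cont.
exact: (within_continuousM dev_cont dev_cont).
Qed.

Lemma gronwall_affine {f : R -> R} {k b : R} : 0 < k ->
  {within `[0, +oo[, continuous f} ->
  (forall t, 0 < t -> derivable f t 1) ->
  (forall t, 0 < t -> derive1 f t <= - k * f t + b) ->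
  forall t, 0 <= t -> f t <= b / k + expR (- (k * t)) * (f 0 - b / k).
Proof.
move=> k_gt0 f_cont f_der f'_le t t_ge0.
have exp_der (s : R) : is_derive s 1 (fun u => expR (k * u)) (expR (k * s) * k).
  have -> : (fun u => expR (k * u)) = expR \o (fun u => k * u) by [].
  exact/is_derive1_comp/is_derive_scale_id.
pose g s := expR (k * s) * (f s - b / k).
have g_der (s : R) : 0 < s ->
    is_derive s 1 g (expR (k * s) * (k * f s - b + derive1 f s)).
  move=> s_gt0; have f_der' := is_derive_derive1 (f_der s s_gt0).
  apply: is_derive_eq
    (is_deriveM (exp_der s) (is_deriveB f_der' (is_derive_cst (b / k) s 1))) _.
  by rewrite /GRing.scale /= !fctE; field; rewrite gt_eqF.
have g_cont : {within `[0, +oo[, continuous g}.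
  apply: within_continuousM.
    apply: continuous_subspaceT => s.
    by apply/differentiable_continuous/derivable1_diffP; have [] := exp_der s.
  exact/within_continuousB/continuous_subspaceT/cst_continuous.
have : g t <= g 0.
  apply: (@ler0_derive1_nincry _ g 0) => // s; rewrite in_itv /= andbT => s_gt0.
    by have [] := g_der s s_gt0.
  rewrite derive1E; have [_ ->] := g_der s s_gt0.
  rewrite pmulr_rle0 ?expR_gt0 //.
  by have := f'_le s s_gt0; lra.
rewrite /g mulr0 expR0 mul1r => g_le.
rewrite expRN -lerBlDl -(ler_pM2l (expR_gt0 (k * t))).
by rewrite mulrA mulfV ?gt_eqF ?expR_gt0 // mul1r.
Qed.

Lemma is_derive0_cst_ge0 {f : R -> R} : {within `[0, +oo[, continuous f} ->
  (forall t : R, 0 < t -> is_derive t 1 f 0) ->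
  forall t : R, 0 <= t -> f t = f 0.
Proof.
move=> f_cont f_der t t_ge0.
have f_der' s : s \in `]0, t[ -> is_derive s 1 f 0.
  by rewrite in_itv /= => /andP [s_gt0 _]; exact: f_der.
have f_cont' : {within `[0, t], continuous f}.
  exact/continuous_subspaceW/f_cont/subset_itvl.
have [s _] := MVT_segment t_ge0 f_der' f_cont'.
by rewrite mul0r => /eqP; rewrite subr_eq0 => /eqP.
Qed.

Lemma limf_esup_le_eventually (f : R -> R) (y : R) :
  (forall e : R, 0 < e -> exists T : R, forall t : R, T < t -> f t <= y + e) ->
  (limf_esup (fun t => (f t)%:E) (+oo%R : set_system R) <= y%:E)%E.
Proof.
move=> f_le; apply/lee_addgt0Pr => e e_gt0.
have [T HT] := f_le e e_gt0.
rewrite limf_esupE.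
apply: (@le_trans _ _ (ereal_sup ((fun t => (f t)%:E) @` [set t | T < t]))).
  apply: ereal_inf_lbound; exists [set t | T < t] => //.
  by exists T; split => //; exact: num_real.
by apply: ge_ereal_sup => _ [t /= Tt <-]; rewrite -EFinD lee_fin; exact: HT.
Qed.

Lemma expR_decay_eventually (D : R) {k e : R} : 0 < k -> 0 < e ->
  exists T : R, 0 <= T /\ forall t : R, T < t -> expR (- (k * t)) * D <= e.
Proof.
move=> k_gt0 e_gt0; have ke_gt0 : 0 < k * e by exact: mulr_gt0.
have T_ge0 : 0 <= `|D| / (k * e) by apply: divr_ge0 => //; exact: ltW.
exists (`|D| / (k * e)); split => // t Tt.
have t_gt0 : 0 < t := le_lt_trans T_ge0 Tt.
rewrite expRN; apply: (@le_trans _ _ ((expR (k * t))^-1 * `|D|)).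
  by apply: ler_wpM2l; [rewrite invr_ge0 ltW // expR_gt0 | exact: ler_norm].
rewrite mulrC ler_pdivrMr ?expR_gt0 //.
have := expR_ge1Dx (k * t).
have : `|D| < k * e * t by move: Tt; rewrite ltr_pdivrMr // mulrC.
rewrite (mulrC k e) -mulrA; move: (k * t) => s.
have : 0 <= `|D| by [].
nra.
Qed.

Lemma ler_mul2_young {k : R} (d u : R) : 0 < k ->
  2 * d * u <= k * d ^+ 2 + u ^+ 2 / k.
Proof.
move=> k_gt0; rewrite -subr_ge0.
have -> : k * d ^+ 2 + u ^+ 2 / k - 2 * d * u = (k * d - u) ^+ 2 / k.
  by field; rewrite gt_eqF.
by rewrite divr_ge0 ?sqr_ge0 ?ltW.
Qed.

End RealCalculus.

Section Masks.
Context {R : realType} {n : nat}.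
Variables (a : 'I_n -> 'I_n -> R) (Am : R) (w : 'I_n -> 'I_n -> R).

Definition dsig i j (t : R) := Am * (cos (w i j * t) * w i j).
Definition dmask i (t : R) :=
  \sum_(j < n | 0 < a i j) (dsig j i t - dsig i j t).
Definition mask_rate i := \sum_(j < n) (`|Am| * `|w j i| + `|Am| * `|w i j|).

Lemma is_derive_sig i j (t : R) :
  is_derive t 1 (Defs.sig Am w i j) (dsig i j t).
Proof.
have sin_der := is_derive1_comp (is_derive_sin (w i j * t))
                                (is_derive_scale_id (w i j) t).
exact: is_derive_eq (is_deriveZ Am sin_der) erefl.
Qed.

Lemma is_derive_mask i (t : R) : is_derive t 1 (Defs.mask a Am w i) (dmask i t).
Proof.
have -> : Defs.mask a Am w i = fun s => \sum_(j < n)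
    (if 0 < a i j then Defs.sig Am w j i s - Defs.sig Am w i j s else 0).
  by apply/funext => s; rewrite /Defs.mask big_mkcond.
rewrite /dmask big_mkcond; apply: is_derive_sum_apply => j.
case: ifP => _; last exact: is_derive_cst.
exact: is_deriveB (is_derive_sig j i t) (is_derive_sig i j t).
Qed.

Lemma continuous_mask i : continuous (Defs.mask a Am w i).
Proof.
move=> t; apply/differentiable_continuous/derivable1_diffP.
by have [] := is_derive_mask i t.
Qed.

Lemma norm_dsig_le i j (t : R) : `|dsig i j t| <= `|Am| * `|w i j|.
Proof.
rewrite !normrM ler_wpM2l // -[leRHS]mul1r ler_wpM2r //.
by rewrite ler_norml cos_le1 cos_geN1.
Qed.

Lemma norm_dmask_le i (t : R) : `|dmask i t| <= mask_rate i.
Proof.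
rewrite /dmask big_mkcond /=; apply: le_trans (ler_norm_sum _ _ _) _.
apply: ler_sum => j _; case: ifP => _.
  by apply: le_trans (ler_normB _ _) _; rewrite lerD ?norm_dsig_le.
by rewrite normr0 addr_ge0 ?mulr_ge0.
Qed.

Lemma within_continuous_add_mask {A : set R} {f : R -> R} i :
  {within A, continuous f} ->
  {within A, continuous (fun s => f s + Defs.mask a Am w i s)}.
Proof.
move=> f_cont; apply: within_continuousD f_cont _.
exact/continuous_subspaceT/continuous_mask.
Qed.

Lemma derivable_add_mask {f : R -> R} i {t : R} : derivable f t 1 ->
  derivable (fun s => f s + Defs.mask a Am w i s) t 1.
Proof.
by move=> f_der; apply: derivableD f_der _; case: (is_derive_mask i t).
Qed.

Lemma norm_derive1_add_mask_le {f : R -> R} i {t M : R} :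
  derivable f t 1 -> `|derive1 f t| <= M ->
  `|derive1 (fun s => f s + Defs.mask a Am w i s) t| <= M + mask_rate i.
Proof.
move=> f_der f'_le; rewrite derive1E.
have -> : (fun s => f s + Defs.mask a Am w i s) = f + Defs.mask a Am w i by [].
have [_ ->] := is_deriveD (is_derive_derive1 f_der) (is_derive_mask i t).
by apply: le_trans (ler_normD _ _) _; rewrite lerD ?norm_dmask_le.
Qed.

Lemma sum_mask (t : R) : (forall i j, a i j = a j i) ->
  \sum_(i < n) Defs.mask a Am w i t = 0.
Proof.
move=> a_sym.
pose F i j := if 0 < a i j then Defs.sig Am w j i t else 0.
have maskE i : Defs.mask a Am w i t = \sum_(j < n) (F i j - F j i).
  rewrite /Defs.mask big_mkcond /=; apply: eq_bigr => j _.
  by rewrite /F (a_sym j i); case: ifP => _; rewrite ?subrr.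
under eq_bigr => i _ do rewrite maskE sumrB.
by rewrite sumrB exchange_big /= subrr.
Qed.

End Masks.

Section Estimator.
Context {R : realType} {n : nat} {a : 'I_n -> 'I_n -> R} {beta : R}.
Context {r zh : 'I_n -> R -> R}.
Hypothesis a_sym : forall i j, a i j = a j i.
Hypothesis r_cont : forall i, {within `[0, +oo[, continuous (r i)}.
Hypothesis r_der : forall i (t : R), 0 < t -> derivable (r i) t 1.
Hypothesis zh_cont : forall i, {within `[0, +oo[, continuous (zh i)}.
Hypothesis zh_init : forall i, zh i 0 = r i 0.
Hypothesis zh_der : forall i (t : R), 0 < t -> derivable (zh i) t 1.
Hypothesis zh_ode : forall i (t : R), 0 < t ->
  derive1 (zh i) t = derive1 (r i) t - beta * laplacian a (zh^~ t) i.

Lemma estimator_sum_conserved (t : R) : 0 <= t ->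
  \sum_(i < n) zh i t = \sum_(i < n) r i t.
Proof.
move=> t_ge0.
pose P s := \sum_(i < n) zh i s - \sum_(i < n) r i s.
have P_cont : {within `[0, +oo[, continuous P}.
  by apply: within_continuousB; apply: within_continuous_sum.
have P_der (s : R) : 0 < s -> is_derive s 1 P 0.
  move=> s_gt0.
  apply: (is_derive_eq (is_deriveB
    (is_derive_sum_apply (fun i => is_derive_derive1 (zh_der i s s_gt0)))
    (is_derive_sum_apply (fun i => is_derive_derive1 (r_der i s s_gt0))))).
  under eq_bigr => i _ do rewrite zh_ode //.
  by rewrite sumrB -mulr_sumr sum_laplacian // mulr0 subr0 subrr.
have P0 : P 0 = 0 by rewrite /P (eq_bigr _ (fun i _ => zh_init i)) subrr.
move/eqP: (is_derive0_cst_ge0 P_cont P_der t t_ge0).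
by rewrite P0 subr_eq0 => /eqP.
Qed.

Context {C : R} {K : 'I_n -> R}.
Hypothesis beta_gt0 : 0 < beta.
Hypothesis C_gt0 : 0 < C.
Hypothesis poincare : forall x, disagreement x <= C * laplacian_form a x.
Hypothesis r_rate : forall i (t : R), 0 < t -> `|derive1 (r i) t| <= K i.

Let V (t : R) := disagreement (zh^~ t).
Let kappa := beta / (2 * C).
Let Q := \sum_(i < n) K i ^+ 2.

Let kappa_gt0 : 0 < kappa.
Proof. by rewrite divr_gt0 ?mulr_gt0. Qed.

Let V_is_derive (t : R) (t_gt0 : 0 < t) :=
  is_derive_disagreement (fun i => is_derive_derive1 (zh_der i t t_gt0)).

Lemma derive1_disagreement_le (t : R) : 0 < t ->
  derive1 V t <= - kappa * V t + Q / kappa.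
Proof.
move=> t_gt0; rewrite derive1E /V.
have [_ ->] := V_is_derive t t_gt0.
pose u i := derive1 (r i) t.
have ode_sum : 2 * \sum_(i < n) (zh i t - avg (zh^~ t)) * derive1 (zh i) t =
    \sum_(i < n) 2 * (zh i t - avg (zh^~ t)) * u i
    - beta * laplacian_form a (zh^~ t).
  rewrite -(laplacian_formE _ _ (avg (zh^~ t)) a_sym) !mulr_sumr -sumrB.
  by apply: eq_bigr => i _; rewrite zh_ode // /u; ring.
have young_sum : \sum_(i < n) 2 * (zh i t - avg (zh^~ t)) * u i <=
    kappa * disagreement (zh^~ t) + Q / kappa.
  apply: le_trans (ler_sum _ (fun i _ => ler_mul2_young _ _ kappa_gt0)) _.
  rewrite big_split /= -mulr_sumr -mulr_suml lerD2l ler_pM2r ?invr_gt0 //.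
  apply: ler_sum => i _; have u_le := r_rate i t t_gt0.
  rewrite -real_normK ?num_real // ler_sqr ?nnegrE //.
  exact: le_trans (normr_ge0 _) u_le.
have energy :
    2 * kappa * disagreement (zh^~ t) <= beta * laplacian_form a (zh^~ t).
  rewrite (_ : 2 * kappa * _ = beta * disagreement (zh^~ t) / C); last first.
    by rewrite /kappa; field; rewrite gt_eqF.
  by rewrite ler_pdivrMr // [_ * C]mulrC mulrCA ler_pM2l // poincare.
rewrite ode_sum; lra.
Qed.

Lemma estimator_deviation_eventually i (e : R) : 0 < e ->
  exists T : R, 0 <= T /\ forall t : R, T < t ->
    `|zh i t - avg (zh^~ t)| <= 2 * C * Num.sqrt Q / beta + e.
Proof.
move=> e_gt0.
have V_cont : {within `[0, +oo[, continuous V}.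
  exact: within_continuous_disagreement zh_cont.
have V_der (t : R) : 0 < t -> derivable V t 1.
  by move=> t_gt0; have [] := V_is_derive t t_gt0.
have V_le := gronwall_affine kappa_gt0 V_cont V_der derive1_disagreement_le.
set y := 2 * C * Num.sqrt Q / beta.
have y_ge0 : 0 <= y by rewrite divr_ge0 ?mulr_ge0 ?sqrtr_ge0 ?ltW.
have Q_ge0 : 0 <= Q by apply: sumr_ge0 => j _; exact: sqr_ge0.
have Q_eq : Q / kappa / kappa = y ^+ 2.
  rewrite /y /kappa expr_div_n !exprMn sqr_sqrtr //.
  by field; rewrite !gt_eqF.
have [T [T_ge0 decay]] :=
  expR_decay_eventually (V 0 - y ^+ 2) kappa_gt0 (mulr_gt0 e_gt0 e_gt0).
exists T; split => // t T_lt_t.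
have t_ge0 : 0 <= t := ltW (le_lt_trans T_ge0 T_lt_t).
have dev_le_V : (zh i t - avg (zh^~ t)) ^+ 2 <= V t.
  exact: ler_term_sum (fun j => (zh j t - avg (zh^~ t)) ^+ 2) i
           (fun j => sqr_ge0 _).
have V_small : V t <= y ^+ 2 + e * e.
  by have := V_le t t_ge0; have := decay t T_lt_t; rewrite Q_eq; lra.
have dev_sqr_le : (zh i t - avg (zh^~ t)) ^+ 2 <= (y + e) ^+ 2.
  have : 0 <= 2 * y * e by apply: mulr_ge0; [exact: mulr_ge0 | exact: ltW].
  have -> : (y + e) ^+ 2 = y ^+ 2 + 2 * y * e + e * e by ring.
  lra.
have ye_ge0 : 0 <= y + e by rewrite addr_ge0 // ltW.
by move: dev_sqr_le; rewrite -real_normK ?num_real // ler_sqr ?nnegrE.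
Qed.

End Estimator.

Theorem theorem1 (R : realType) (N : nat) (a : 'I_N -> 'I_N -> R)
  (Am : R) (w : 'I_N -> 'I_N -> R) (z : 'I_N -> R -> R) :
  weights_ok a -> graph_connected a -> 0 < Am ->
  (forall i, ref_signal_ok (z i)) ->
  exists c : R, 0 <= c /\
    forall (beta : R) (zh : 'I_N -> R -> R), 0 < beta ->
      estimator_solution a Am w z beta zh ->
      forall i : 'I_N,
        (limf_esup (fun t : R => (`|zh i t - (\sum_(j < N) z j t) / N%:R|)%:E)
           (+oo%R : set_system R) <= (c / beta)%:E)%E.
Proof.
move=> [a_sym a_ge0] a_conn _ z_ok.
have [C [C_gt0 poincare]] := poincare_laplacian a_ge0 a_conn.
have /choice [M z_rate] : forall i, exists M : R,
    forall t : R, 0 < t -> `|derive1 (z i) t| <= M.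
  by move=> i; have [_ [_ [_]]] := z_ok i.
pose K i := M i + mask_rate Am w i.
exists (2 * C * Num.sqrt (\sum_(i < N) K i ^+ 2)).
split; first by rewrite !mulr_ge0 ?sqrtr_ge0 // ltW.
move=> beta zh beta_gt0 zh_sol i.
pose r j s := z j s + Defs.mask a Am w j s.
have z_der j := (z_ok j).2.1.
have r_cont j : {within `[0, +oo[, continuous (r j)} :=
  within_continuous_add_mask a Am w j (z_ok j).1.
have r_der j (t : R) (t_gt0 : 0 < t) : derivable (r j) t 1 :=
  derivable_add_mask a Am w j (z_der j t t_gt0).
have r_rate j (t : R) (t_gt0 : 0 < t) : `|derive1 (r j) t| <= K j :=
  norm_derive1_add_mask_le a Am w j (z_der j t t_gt0) (z_rate j t t_gt0).
have zh_cont j := (zh_sol j).1.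
have zh_init j : zh j 0 = r j 0 := (zh_sol j).2.1.
have zh_der j (t : R) (t_gt0 : 0 < t) := ((zh_sol j).2.2 t t_gt0).1.
have zh_ode j (t : R) (t_gt0 : 0 < t) :
    derive1 (zh j) t = derive1 (r j) t - beta * laplacian a (zh^~ t) j :=
  ((zh_sol j).2.2 t t_gt0).2.
apply: limf_esup_le_eventually => e e_gt0.
have [T [T_ge0 dev_le]] := estimator_deviation_eventually
  a_sym zh_cont zh_der zh_ode beta_gt0 C_gt0 poincare r_rate i e e_gt0.
exists T => t T_lt_t.
have t_ge0 : 0 <= t := ltW (le_lt_trans T_ge0 T_lt_t).
have sum_zh : \sum_(j < N) zh j t = \sum_(j < N) z j t.
  rewrite (estimator_sum_conserved a_sym r_cont r_der zh_cont zh_init zh_der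
             zh_ode _ t_ge0).
  by rewrite big_split /= sum_mask // addr0.
by rewrite -sum_zh; exact: dev_le.
Qed.
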